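(* Let $p\geq 5$ be prime, let $v\in\mathbb{R}^p$ have pairwise distinct coordinates, and let $H=(a_1,\dots,a_p)^\perp$ be a hyperplane. Let $\sigma=(ij)(kl)$ with $i,j,k,l$ distinct, and let $\pi$ be a $p$-cycle. Let $G\subset S_p$ be a subgroup containing $\pi$ such that $\dim\mathrm{Span}(Gv)>3$. If $H$ contains $Gv$ and $\sigma Gv$, then $a_i=a_j$ and $a_k=a_l$.
   Context: $S_p$ acts on $\mathbb{R}^p$ by permuting coordinates (the $j$-th coordinate of $\epsilon v$ is $v_{\epsilon^{-1}(j)}$); $Gv=\{gv:g\in G\}$. $(a_1,\dots,a_p)^\perp$ denotes the hyperplane $\{x:\sum_m a_mx_m=0\}$ with $(a_1,\dots,a_p)\neq 0$. *)

From HB Require Import structures.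
From mathcomp Require Import all_boot all_order all_algebra all_fingroup.
From mathcomp Require Import reals.
Set Implicit Arguments. Unset Strict Implicit. Unset Printing Implicit Defensive.
Import GRing.Theory Num.Theory.
Local Open Scope ring_scope.

Definition pact (R : ringType) (p : nat) (s : 'S_p) (v : 'rV[R]_p) : 'rV[R]_p :=
  \row_j v 0 (s^-1 j)%g.

Definition orbit_seq (R : ringType) (p : nat) (G : {group 'S_p}) (v : 'rV[R]_p)
  : seq 'rV[R]_p := [seq pact g v | g in G].

Definition in_hyperplane (R : ringType) (p : nat) (a x : 'rV[R]_p) : Prop :=
  \sum_(m < p) a 0 m * x 0 m = 0.

Definition is_pcycle (p : nat) (s : 'S_p) : Prop :=
  exists x : 'I_p, porbit s x = [set: 'I_p].

(* Let d := a - a o sigma.  The two hyperplane conditions say that d is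
   orthogonal to every vector of G v; since the powers of pi lie in G, every x
   in Span(G v) satisfies sum_m d_m x_(pi^t m) = 0 for all t.  Number the
   coordinates along the p-cycle, m = pi^(n_m) x0, and put z_m := w^(n_m) for a
   primitive p-th root of unity w.  For the transform dft f s := sum_m f_m z_m^s
   the identity above reads dft d s * conj (dft x s) = 0.
   If a_i <> a_j or a_k <> a_l, then
     dft d s = (a_i - a_j) (z_i^s - z_j^s) + (a_k - a_l) (z_k^s - z_l^s)
   vanishes for at most two s in (0, p), namely some s0 and p - s0: two zeros
   s, t make a 2x2 determinant vanish, which is an equality between two sums of
   four powers of w; as the p-th cyclotomic polynomial is irreducible over Q,
   the two multisets of exponents agree modulo p, and for p >= 5 this forces
   t = +-s in F_p.  So dft x vanishes outside {0, s0, p - s0}, and as x is real,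
   dft x (p - s0) = conj (dft x s0); hence x |-> (dft x 0, Re (dft x s0),
   Im (dft x s0)) is injective on Span(G v), whose dimension is at most 3. *)

From mathcomp Require Import all_boot all_order all_algebra all_fingroup all_field.
From mathcomp Require Import reals complex ring zify.
Set Implicit Arguments. Unset Strict Implicit. Unset Printing Implicit Defensive.
Import GRing.Theory Num.Theory.
Local Open Scope ring_scope.

Definition geom_poly (p : nat) : {poly rat} := \poly_(n < p) 1.

Lemma size_geom_poly p : size (geom_poly p) = p.
Proof. by rewrite size_poly_eq // oner_eq0. Qed.

Lemma horner_geom_poly (F : numFieldType) p (z : F) :
  (map_poly ratr (geom_poly p)).[z] = \sum_(n < p) z ^+ n.
Proof.
rewrite (@horner_coef_wide _ p) ?size_map_poly ?size_geom_poly //.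
by apply: eq_bigr => n _; rewrite coef_map /= /geom_poly coef_poly ltn_ord rmorph1 mul1r.
Qed.

Lemma sum_expr_unity_root (F : fieldType) p (z : F) :
  z ^+ p = 1 -> z != 1 -> \sum_(n < p) z ^+ n = 0.
Proof.
move=> zp1 z_neq1; have : (z - 1) * \sum_(n < p) z ^+ n == 0.
  by rewrite -subrX1 zp1 subrr.
by rewrite mulf_eq0 subr_eq0 (negbTE z_neq1) => /eqP.
Qed.

Lemma prim_root_neq1 (F : fieldType) p (z : F) : (1 < p)%N ->
  p.-primitive_root z -> z != 1.
Proof.
move=> p_gt1 prim_z; apply/eqP => z1.
by have := eq_prim_root_expr prim_z 1 0; rewrite z1 expr1n expr0 eqxx mod0n modn_small.
Qed.

Lemma root_geom_poly (F : numFieldType) p (z : F) : prime p ->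
  root (map_poly ratr (geom_poly p)) z = p.-primitive_root z.
Proof.
move=> p_pr; have p_gt1 := prime_gt1 p_pr.
apply/idP/idP => [root_z | prim_z]; last first.
  rewrite /root horner_geom_poly sum_expr_unity_root ?(prim_expr_order prim_z) //.
  exact: prim_root_neq1 p_gt1 prim_z.
have z_neq1 : z != 1.
  apply: contraTneq root_z => ->; rewrite /root horner_geom_poly.
  under eq_bigr do rewrite expr1n.
  by rewrite sumr_const card_ord pnatr_eq0 -lt0n prime_gt0.
have zp1 : z ^+ p = 1.
  by apply/eqP; rewrite -subr_eq0 subrX1 -horner_geom_poly (eqP root_z) mulr0.
have [m prim_m m_dvd] := prim_order_exists (prime_gt0 p_pr) zp1.
case/primeP: p_pr => _ /(_ m m_dvd) /pred2P [m1 | <- //].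
move: prim_m; rewrite m1 => /prim_expr_order.
by rewrite expr1 => /eqP; rewrite (negbTE z_neq1).
Qed.

Lemma closed_prim_root_exists (C : numClosedFieldType) p :
  prime p -> exists w : C, p.-primitive_root w.
Proof.
move=> p_pr; have [w root_w] : exists w : C, root (map_poly ratr (geom_poly p)) w.
  by apply/closed_rootP; rewrite size_map_poly size_geom_poly gtn_eqF ?prime_gt1.
by exists w; rewrite -root_geom_poly.
Qed.

Lemma geom_poly_irreducible p : prime p -> irreducible_poly (geom_poly p).
Proof.
move=> p_pr; split=> [|q sz_q q_dvd]; first by rewrite size_geom_poly prime_gt1.
have geom_neq0 : geom_poly p != 0 by rewrite -size_poly_eq0 size_geom_poly -lt0n prime_gt0.
have q_neq0 : q != 0 by apply: contraNneq geom_neq0 => q0; rewrite -dvd0p -q0.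
have [y root_y] : exists y : algC, root (map_poly ratr q) y.
  by apply/closed_rootP; rewrite size_map_poly.
have prim_y : p.-primitive_root y.
  by rewrite -(root_geom_poly _ p_pr); apply: root_dvdp root_y; rewrite dvdp_map.
have [m [Dm _] dvd_m] := minCpolyP y.
have size_m : size m = p.
  have := size_cyclotomic y p; rewrite -(minCpoly_cyclotomic prim_y) Dm size_map_poly.
  by rewrite totient_prime // prednK // prime_gt0.
rewrite -dvdp_size_eqp // eqn_leq (dvdp_leq geom_neq0 q_dvd) size_geom_poly -size_m.
by rewrite (dvdp_leq q_neq0) // -dvd_m.
Qed.

Lemma geom_poly_dvd (F : numFieldType) p (z : F) (q : {poly rat}) :
  prime p -> p.-primitive_root z -> root (map_poly ratr q) z -> geom_poly p %| q.
Proof.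
move=> p_pr prim_z root_q.
have [g_eq1 | g_eq] := irredp_XsubCP (geom_poly_irreducible p_pr) (dvdp_gcdl (geom_poly p) q).
  move: g_eq1; rewrite gcdp_eqp1 -(coprimep_map (ratr : {rmorphism rat -> F})).
  move=> /(@coprimep_root _ _ _ z).
  by rewrite root_geom_poly // prim_z (eqP root_q) eqxx => /(_ isT).
by rewrite -(eqp_dvdl _ g_eq) dvdp_gcdr.
Qed.

Lemma prim_root_rat_comb_const (F : numFieldType) p (z : F) (c : nat -> rat) :
    prime p -> p.-primitive_root z -> \sum_(n < p) ratr (c n) * z ^+ n = 0 ->
  forall n, (n < p)%N -> c n = c 0%N.
Proof.
move=> p_pr prim_z comb_eq0; pose q := \poly_(n < p) c n.
have coef_q n : (n < p)%N -> q`_n = c n by rewrite coef_poly => ->.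
have root_q : root (map_poly ratr q) z.
  rewrite /root (@horner_coef_wide _ p) ?size_map_poly ?size_poly //.
  by apply/eqP; rewrite -[RHS]comb_eq0; apply: eq_bigr => n _; rewrite coef_map /= coef_q.
have [q0 | q_neq0] := eqVneq q 0.
  by move=> n n_lt; rewrite -coef_q // -coef_q ?prime_gt0 // q0 !coef0.
have geom_dvd := geom_poly_dvd p_pr prim_z root_q.
have : geom_poly p %= q.
  by rewrite -dvdp_size_eqp // eqn_leq (dvdp_leq q_neq0 geom_dvd) size_geom_poly size_poly.
case/eqpP=> [[a b] /= /andP[a_neq0 b_neq0] geom_q] n n_lt.
have coef_geom m : (m < p)%N -> c m = a / b.
  move=> m_lt; have := congr1 (coefp m) geom_q.
  by rewrite /= !coefZ coef_poly m_lt coef_q // mulr1 => ->; rewrite mulrC mulKf.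
by rewrite !coef_geom ?prime_gt0.
Qed.

Lemma sum_expr_count_mod (R : nzRingType) p (z : R) (P : seq nat) :
    (0 < p)%N -> z ^+ p = 1 ->
  \sum_(x <- P) z ^+ x = \sum_(n < p) (count (fun x => (x %% p)%N == n) P)%:R * z ^+ n.
Proof.
move=> p_gt0 zp1; elim: P => [|x P IHP].
  by rewrite big_nil big1 // => n _; rewrite mul0r.
rewrite big_cons IHP /= -(expr_mod x zp1) (bigD1 (Ordinal (ltn_pmod x p_gt0))) //=.
rewrite [RHS](bigD1 (Ordinal (ltn_pmod x p_gt0))) //= eqxx natrD mulrDl mul1r addrA.
congr (_ + _); apply: eq_bigr => n /negbTE n_neq.
by rewrite -val_eqE /= eq_sym in n_neq; rewrite n_neq add0n.
Qed.

Lemma prim_root_sum_expr_perm_eq (F : numFieldType) p (z : F) (P N : seq nat) :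
    prime p -> p.-primitive_root z -> size P = size N ->
    \sum_(x <- P) z ^+ x = \sum_(x <- N) z ^+ x ->
  perm_eq [seq (x %% p)%N | x <- P] [seq (x %% p)%N | x <- N].
Proof.
move=> p_pr prim_z size_PN sum_PN; have p_gt0 := prime_gt0 p_pr.
pose cnt (S : seq nat) n := count (fun x => (x %% p)%N == n) S.
pose c n : rat := (cnt P n)%:R - (cnt N n)%:R.
have sum_c (y : F) : y ^+ p = 1 -> \sum_(n < p) ratr (c n) * y ^+ n =
    \sum_(x <- P) y ^+ x - \sum_(x <- N) y ^+ x.
  move=> yp1; rewrite !(sum_expr_count_mod _ p_gt0 yp1) -sumrB.
  by apply: eq_bigr => n _; rewrite rmorphB /= !ratr_nat mulrBl.
have c_const : forall n, (n < p)%N -> c n = c 0%N.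
  apply: (@prim_root_rat_comb_const F p z c p_pr prim_z).
  by rewrite sum_c ?sum_PN ?subrr ?prim_expr_order.
have sum_ones (S : seq nat) : \sum_(x <- S) (1 : F) ^+ x = (size S)%:R.
  by under eq_bigr do rewrite expr1n; rewrite big_const_seq count_predT iter_addr_0.
have c0 : c 0%N = 0.
  have := sum_c 1 (expr1n _ _).
  rewrite (eq_bigr (fun _ => ratr (c 0%N))) => [|n _]; last by rewrite expr1n mulr1 c_const.
  rewrite sumr_const card_ord !sum_ones size_PN subrr.
  by move/eqP; rewrite mulrn_eq0 gtn_eqF //= fmorph_eq0 => /eqP.
apply/allP => n; rewrite mem_cat => /orP n_in.
have n_lt : (n < p)%N.
  by case: n_in => /mapP[x _ ->]; rewrite ltn_pmod.
rewrite /= !count_map -(eqr_nat rat) -subr_eq0.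
by have := c_const n n_lt; rewrite c0 => /eqP.
Qed.

Lemma det2_eq_of_kernel (F : idomainType) (x y a1 b1 a2 b2 : F) :
    (x != 0) || (y != 0) -> x * a1 + y * b1 = 0 -> x * a2 + y * b2 = 0 ->
  a1 * b2 = a2 * b1.
Proof.
move=> xy E1 E2; apply/eqP; rewrite -subr_eq0.
have Ex : x * (a1 * b2 - a2 * b1) = (x * a1 + y * b1) * b2 - (x * a2 + y * b2) * b1.
  by ring.
have Ey : y * (a1 * b2 - a2 * b1) = (x * a2 + y * b2) * a1 - (x * a1 + y * b1) * a2.
  by ring.
rewrite E1 E2 !mul0r subrr in Ex Ey.
case/orP: xy => [x_neq0 | y_neq0].
  by move/eqP: Ex; rewrite mulf_eq0 (negbTE x_neq0).
by move/eqP: Ey; rewrite mulf_eq0 (negbTE y_neq0).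
Qed.

Lemma Fp_nat_eq p (x y : nat) : prime p -> ((x%:R : 'F_p) == y%:R) = (x == y %[mod p]).
Proof. by move=> p_pr; rewrite -(inj_eq val_inj) /= !val_Fp_nat. Qed.

Lemma cross_sums_perm_eq (F : fieldType) (a b c e s t : F) :
    2 != 0 :> F -> a != b -> a != c -> a != e -> b != e -> c != e ->
    s != 0 -> t != 0 ->
    perm_eq [:: a * s + c * t; b * s + e * t; a * t + e * s; b * t + c * s]
            [:: a * s + e * t; b * s + c * t; a * t + c * s; b * t + e * s] ->
  s = t \/ s + t = 0.
Proof.
move=> two_neq0 ab ac ae be ce s_neq0 t_neq0 /perm_mem mem_eq.
have [-> | st] := eqVneq s t; first by left.
have [| spt] := eqVneq (s + t) 0; [by right | exfalso].
have nz (x y : F) : x != y -> x - y != 0 by rewrite subr_eq0.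
have absurd (f g x y : F) : f != 0 -> g != 0 -> x = y -> x - y = f * g -> False.
  move=> f_neq0 g_neq0 -> /eqP.
  by rewrite subrr eq_sym mulf_eq0 (negbTE f_neq0) (negbTE g_neq0).
have := mem_head (a * s + c * t) [:: b * s + e * t; a * t + e * s; b * t + c * s].
rewrite mem_eq !inE => /or4P[] /eqP E1.
- by apply: (absurd t (c - e) _ _ t_neq0 (nz _ _ ce) E1); ring.
- by apply: (absurd s (a - b) _ _ s_neq0 (nz _ _ ab) E1); ring.
- by apply: (absurd (s - t) (a - c) _ _ (nz _ _ st) (nz _ _ ac) E1); ring.
have : b * s + e * t \in [:: a * s + c * t; b * s + e * t; a * t + e * s; b * t + c * s].
  by rewrite !inE eqxx orbT.
rewrite mem_eq !inE => /or4P[] /eqP E2.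
- by apply: (absurd (- s) (a - b) _ _ _ (nz _ _ ab) E2); rewrite ?oppr_eq0 //; ring.
- by apply: (absurd (- t) (c - e) _ _ _ (nz _ _ ce) E2); rewrite ?oppr_eq0 //; ring.
- have D1 : (s + t) * (a - b + c - e) = 0.
    transitivity (a * s + c * t - (b * t + e * s) - (b * s + e * t - (a * t + c * s))).
      by ring.
    by rewrite E1 E2 !subrr.
  have D2 : (s - t) * (a + b - c - e) = 0.
    transitivity (a * s + c * t - (b * t + e * s) + (b * s + e * t - (a * t + c * s))).
      by ring.
    by rewrite E1 E2 !subrr addr0.
  move/eqP: D1; rewrite mulf_eq0 (negbTE spt) /= => /eqP D1.
  move/eqP: D2; rewrite mulf_eq0 (negbTE (nz _ _ st)) /= => /eqP D2.
  apply: (absurd 2 (a - e) 0 0 two_neq0 (nz _ _ ae)) => //.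
  by transitivity ((a - b + c - e) + (a + b - c - e)); [rewrite D1 D2 addr0 subr0 | ring].
- by apply: (absurd (s - t) (b - e) _ _ (nz _ _ st) (nz _ _ be) E2); ring.
Qed.

Lemma sum_mul_pact (R : ringType) p (a x : 'rV[R]_p) (s : 'S_p) :
  \sum_m a 0 m * pact s x 0 m = \sum_m a 0 (s m) * x 0 m.
Proof.
by rewrite (reindex_inj (@perm_inj _ s)); apply: eq_bigr => m _; rewrite mxE permK.
Qed.

Lemma span_orbit_annihilated (K : fieldType) p (G : {group 'S_p}) (v : 'rV[K]_p)
    (d : 'I_p -> K) :
    (forall g, g \in G -> \sum_m d m * pact g v 0 m = 0) ->
  forall x, x \in <<orbit_seq G v>>%VS -> forall h, h \in G ->
    \sum_m d m * x 0 (h m) = 0.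
Proof.
move=> d_orbit x x_in h h_in.
pose M : 'cV[K]_p := \col_n d ((h^-1)%g n).
have xM (y : 'rV[K]_p) : (y *m M) 0 0 = \sum_m d m * y 0 (h m).
  rewrite mxE (reindex_inj (@perm_inj _ h)).
  by apply: eq_bigr => m _; rewrite mxE permK mulrC.
have : (<<orbit_seq G v>> <= lker (linfun (mulmxr M)))%VS.
  apply/span_subvP => _ /imageP[g g_in ->]; rewrite memv_ker lfunE /=.
  apply/eqP/rowP => o; rewrite ord1 xM mxE -[RHS](d_orbit (g * h^-1)%g) ?groupM ?groupV //.
  by apply: eq_bigr => m _; rewrite !mxE invMg invgK permM.
by move/subvP/(_ x x_in); rewrite memv_ker lfunE /= -xM => /eqP ->; rewrite mxE.
Qed.

Lemma dimv_le_of_injective (K : fieldType) m n (U : {vspace 'rV[K]_m}) (M : 'M[K]_(m, n)) :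
  {in U, forall x, x *m M = 0 -> x = 0} -> (\dim U <= n)%N.
Proof.
move=> M_inj; pose f : 'Hom('rV[K]_m, 'rV[K]_n) := linfun (mulmxr M).
have cap0 : (U :&: lker f = 0)%VS.
  apply/eqP; rewrite -subv0; apply/subvP => x; rewrite memv_cap memv0 memv_ker lfunE /=.
  by case/andP => x_in /eqP/(M_inj x x_in) ->.
by rewrite -(limg_dim_eq cap0) (leq_trans (dimvS (subvf _))) // dimvf /dim /= mul1n.
Qed.

Section CycleIndex.
Variables (p : nat) (pi : 'S_p) (x0 : 'I_p).
Hypothesis orbit_full : porbit pi x0 = [set: 'I_p].

Definition cycle_index (m : 'I_p) : nat := index m (traject pi x0 p).

Let card_orbit : #|porbit pi x0| = p.
Proof. by rewrite orbit_full cardsT card_ord. Qed.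

Let uniq_traject : uniq (traject pi x0 p).
Proof. by have := uniq_traject_porbit pi x0; rewrite card_orbit. Qed.

Let mem_traject m : m \in traject pi x0 p.
Proof. by have := porbit_traject pi x0 m; rewrite card_orbit orbit_full inE. Qed.

Lemma cycle_index_lt m : (cycle_index m < p)%N.
Proof. by rewrite -[p](size_traject pi x0) index_mem. Qed.

Lemma iter_cycle_index m : iter (cycle_index m) pi x0 = m.
Proof. by rewrite -(nth_traject pi (cycle_index_lt m)) nth_index. Qed.

Lemma cycle_index_inj : injective cycle_index.
Proof. by move=> m n eq_mn; rewrite -(iter_cycle_index m) eq_mn iter_cycle_index. Qed.

Lemma cycle_index_iter k : cycle_index (iter k pi x0) = (k %% p)%N.
Proof.
have p_gt0 : (0 < p)%N by rewrite -card_orbit lt0n card_porbit_neq0.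
rewrite {1}(divn_eq k p) addnC iterD.
have -> : iter (k %/ p * p) pi x0 = x0.
  have iter_p : iter p pi x0 = x0 by have := iter_porbit pi x0; rewrite card_orbit.
  by elim: (k %/ p)%N => //= n IHn; rewrite mulSn iterD IHn iter_p.
rewrite /cycle_index -(nth_traject pi (ltn_pmod k p_gt0)).
by rewrite index_uniq ?size_traject ?ltn_pmod.
Qed.

Lemma cycle_index_permX t m : cycle_index ((pi ^+ t)%g m) = ((cycle_index m + t) %% p)%N.
Proof. by rewrite permX -{1}(iter_cycle_index m) -iterD addnC cycle_index_iter. Qed.

End CycleIndex.

Section DiscreteFourier.
Variables (R : rcfType) (p : nat) (pi : 'S_p) (x0 : 'I_p) (w : R[i]).
Hypotheses (p_gt0 : (0 < p)%N) (orbit_full : porbit pi x0 = [set: 'I_p]).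
Hypothesis prim_w : p.-primitive_root w.
Local Open Scope complex_scope.

Definition cycle_root (m : 'I_p) : R[i] := w ^+ cycle_index pi x0 m.

Definition dft (f : 'I_p -> R) (s : nat) : R[i] := \sum_m (f m)%:C * cycle_root m ^+ s.

Lemma cycle_root_permX t m : cycle_root ((pi ^+ t)%g m) = w ^+ t * cycle_root m.
Proof. by rewrite /cycle_root cycle_index_permX // prim_expr_mod // exprD mulrC. Qed.

Lemma cycle_root_inj : injective cycle_root.
Proof.
move=> m n /eqP; rewrite (eq_prim_root_expr prim_w) !modn_small ?cycle_index_lt //.
by move/eqP/cycle_index_inj; apply.
Qed.

Lemma cycle_root_expp m : cycle_root m ^+ p = 1.
Proof. by rewrite /cycle_root -exprM mulnC exprM (prim_expr_order prim_w) expr1n. Qed.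

Lemma cycle_root_neq0 m : cycle_root m != 0.
Proof.
by apply: contra_eq_neq (cycle_root_expp m) => ->; rewrite expr0n gtn_eqF // eq_sym oner_eq0.
Qed.

Lemma conj_cycle_root m : (cycle_root m)^*%R = (cycle_root m)^-1.
Proof.
have norm1 : `|cycle_root m| = 1.
  by apply/eqP; rewrite -(pexpr_eq1 (n := p)) // -normrX cycle_root_expp normr1.
by rewrite invC_norm norm1 expr1n invr1 mul1r.
Qed.

Lemma conj_dft f s : (dft f s)^*%R = \sum_m (f m)%:C * (cycle_root m)^-1 ^+ s.
Proof.
rewrite rmorph_sum; apply: eq_bigr => m _.
by rewrite rmorphM rmorphXn /= conj_cycle_root conj_Creal // complex_real.
Qed.

Lemma dft_p_subn f s : (s <= p)%N -> dft f (p - s) = (dft f s)^*%R.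
Proof.
move=> le_sp; rewrite conj_dft; apply: eq_bigr => m _; congr (_ * _).
rewrite -[LHS]mulr1 -(mulfV (expf_neq0 s (cycle_root_neq0 m))) mulrA -exprD.
by rewrite subnK // cycle_root_expp mul1r exprVn.
Qed.

Lemma orbit_perm_inj m : injective (fun t : 'I_p => (pi ^+ t)%g m).
Proof.
move=> t u /(congr1 cycle_root); rewrite !cycle_root_permX => /(mulIf (cycle_root_neq0 m)).
by move/eqP; rewrite (eq_prim_root_expr prim_w) !modn_small // => /eqP/val_inj.
Qed.

Lemma dft_mul_conj_eq0 (d f : 'I_p -> R) s :
    (forall t : 'I_p, \sum_m d m * f ((pi ^+ t)%g m) = 0) ->
  dft d s * (dft f s)^*%R = 0.
Proof.
move=> corr0; rewrite conj_dft mulr_suml.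
transitivity (\sum_m \sum_(t : 'I_p) (d m * f ((pi ^+ t)%g m))%:C * (w ^+ t)^-1 ^+ s).
  apply: eq_bigr => m _; rewrite (reindex_inj (@orbit_perm_inj m)) mulr_sumr /=.
  apply: eq_bigr => t _; rewrite cycle_root_permX invfM exprMn rmorphM /= !exprVn.
  by field; rewrite !expf_neq0 ?cycle_root_neq0 // (prim_root_eq0 prim_w) -lt0n.
rewrite exchange_big big1 // => t _.
by rewrite -mulr_suml -rmorph_sum /= corr0 mul0r.
Qed.

Lemma dft_eq0 (f : 'I_p -> R) :
  (forall s, (s < p)%N -> dft f s = 0) -> forall m, f m = 0.
Proof.
move=> dft0 n.
have : \sum_(s < p) \sum_m (f m)%:C * (cycle_root m / cycle_root n) ^+ s = 0.
  rewrite big1 // => s _; transitivity (dft f s * (cycle_root n)^-1 ^+ s).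
    by rewrite /dft mulr_suml; apply: eq_bigr => m _; rewrite exprMn mulrA.
  by rewrite dft0 ?mul0r.
rewrite exchange_big (bigD1 n) //= [X in _ + X]big1 ?addr0 => [|m m_neq_n]; last first.
  rewrite -mulr_sumr sum_expr_unity_root ?mulr0 //.
    by rewrite exprMn exprVn !cycle_root_expp invr1 mulr1.
  by apply: contra m_neq_n => /eqP/divr1_eq/cycle_root_inj ->.
under eq_bigr do rewrite divff ?cycle_root_neq0 // expr1n mulr1.
rewrite sumr_const card_ord -rmorphMn /= => /eqP.
by rewrite -(rmorph0 (real_complex R)) (inj_eq (@complexI R)) mulrn_eq0 gtn_eqF //= => /eqP.
Qed.

Lemma dftD (f g : 'I_p -> R) s : dft (fun m => f m + g m) s = dft f s + dft g s.
Proof. by rewrite -big_split; apply: eq_bigr => m _; rewrite rmorphD mulrDl. Qed.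

Lemma dft_transposition (b : 'I_p -> R) i j s : i != j ->
  dft (fun m => b m - b (tperm i j m)) s =
    (b i - b j)%:C * (cycle_root i ^+ s - cycle_root j ^+ s).
Proof.
move=> ij; rewrite /dft (bigD1 i) // (bigD1 j) 1?eq_sym //= big1 => [|m /andP[m_i m_j]].
  by rewrite tpermL tpermR !rmorphB /= addr0; ring.
by rewrite tpermD 1?eq_sym // subrr mul0r.
Qed.

Lemma dft_double_transposition (a : 'I_p -> R) i j k l s :
    i != j -> k != l -> i != k -> i != l -> j != k -> j != l ->
  dft (fun m => a m - a ((tperm i j * tperm k l)%g m)) s =
    (a i - a j)%:C * (cycle_root i ^+ s - cycle_root j ^+ s) +
    (a k - a l)%:C * (cycle_root k ^+ s - cycle_root l ^+ s).
Proof.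
move=> ij kl ik il jk jl; pose c m := a (tperm k l m).
transitivity (dft (fun m => (a m - c m) + (c m - c (tperm i j m))) s).
  by apply: eq_bigr => m _; rewrite permM subrKA.
by rewrite dftD addrC !dft_transposition // /c !tpermD // eq_sym.
Qed.

Lemma Re_dft f s : complex.Re (dft f s) = \sum_m f m * complex.Re (cycle_root m ^+ s).
Proof.
rewrite raddf_sum; apply: eq_bigr => m _.
by case: (cycle_root m ^+ s) => u v /=; rewrite mul0r subr0.
Qed.

Lemma Im_dft f s : complex.Im (dft f s) = \sum_m f m * complex.Im (cycle_root m ^+ s).
Proof.
rewrite raddf_sum; apply: eq_bigr => m _.
by case: (cycle_root m ^+ s) => u v /=; rewrite mul0r addr0.
Qed.

Lemma dim_span_orbit_le3 (G : {group 'S_p}) (v : 'rV[R]_p) (d : 'I_p -> R) s0 :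
    pi \in G -> (forall g, g \in G -> \sum_m d m * pact g v 0 m = 0) -> (s0 < p)%N ->
    (forall s, (0 < s < p)%N -> dft d s = 0 -> s = s0 \/ (s + s0 = p)%N) ->
  (\dim <<orbit_seq G v>> <= 3)%N.
Proof.
move=> pi_in d_orbit s0_lt d_zeros.
pose u m := cycle_root m ^+ s0.
pose M : 'M[R]_(p, 3) := \matrix_(m, r) [:: 1; complex.Re (u m); complex.Im (u m)]`_r.
apply: (@dimv_le_of_injective _ _ _ _ M) => x x_in /rowP xM0.
pose X := dft (fun m => x 0 m).
have col (r : 'I_3) : \sum_m x 0 m * [:: 1; complex.Re (u m); complex.Im (u m)]`_r = 0.
  by have := xM0 r; rewrite !mxE /M; under eq_bigr do rewrite mxE.
have := col 2; have := col 1; have := col 0; rewrite /= => sum_x sum_re sum_im.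
have X0 : X 0%N = 0.
  rewrite /X /dft (eq_bigr (fun m => (x 0 m * 1)%:C)) => [|m _]; last by rewrite !mulr1.
  by rewrite -rmorph_sum /= sum_x.
have Xs0 : X s0 = 0.
  apply/eqP; rewrite eq_complex Re_dft Im_dft.
  by apply/andP; split; apply/eqP; [exact: sum_re | exact: sum_im].
have X_span s : dft d s != 0 -> X s = 0.
  move=> ds_neq0; apply/eqP; rewrite -conjC_eq0.
  have /eqP := dft_mul_conj_eq0 s
    (fun t => span_orbit_annihilated d_orbit x_in (groupX t pi_in)).
  by rewrite mulf_eq0 (negbTE ds_neq0).
apply/rowP => m; rewrite mxE; apply: dft_eq0 => s s_lt.
have [-> // | s_neq0] := eqVneq s 0%N.
have [-> // | s_neq_s0] := eqVneq s s0.
have [-> | s_neq] := eqVneq s (p - s0)%N.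
  by rewrite (dft_p_subn _ (ltnW s0_lt)) -/X Xs0 conjC0.
apply: X_span; apply: contra_neq s_neq_s0 => /d_zeros.
rewrite lt0n s_neq0 s_lt => /(_ isT) [//|st_p].
by move/eqP: s_neq; rewrite -st_p addnK.
Qed.

End DiscreteFourier.

Section DoubleTranspositionZeros.
Variables (R : rcfType) (p : nat) (pi : 'S_p) (x0 : 'I_p) (w : R[i]).
Hypotheses (p_pr : prime p) (p_ge5 : (5 <= p)%N).
Hypotheses (orbit_full : porbit pi x0 = [set: 'I_p]) (prim_w : p.-primitive_root w).
Variables (i j k l : 'I_p).
Hypotheses (ij : i != j) (ik : i != k) (il : i != l) (jl : j != l) (kl : k != l).
Local Notation e := (cycle_root pi x0 w).
Local Notation ind := (cycle_index pi x0).

Lemma double_transposition_dft_zeros (x y : R[i]) s t :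
    (x != 0) || (y != 0) -> (0 < s < p)%N -> (0 < t < p)%N ->
    x * (e i ^+ s - e j ^+ s) + y * (e k ^+ s - e l ^+ s) = 0 ->
    x * (e i ^+ t - e j ^+ t) + y * (e k ^+ t - e l ^+ t) = 0 ->
  s = t \/ (s + t = p)%N.
Proof.
move=> xy /andP[s_gt0 s_lt] /andP[t_gt0 t_lt] Ds Dt.
have det := det2_eq_of_kernel xy Ds Dt.
pose P := [:: ind i * s + ind k * t; ind j * s + ind l * t;
              ind i * t + ind l * s; ind j * t + ind k * s]%N.
pose N := [:: ind i * s + ind l * t; ind j * s + ind k * t;
              ind i * t + ind k * s; ind j * t + ind l * s]%N.
have sum_PN : \sum_(x <- P) w ^+ x = \sum_(x <- N) w ^+ x.
  apply/eqP; rewrite -subr_eq0; apply/eqP.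
  transitivity ((e i ^+ s - e j ^+ s) * (e k ^+ t - e l ^+ t) -
                (e i ^+ t - e j ^+ t) * (e k ^+ s - e l ^+ s)); last by rewrite det subrr.
  by rewrite /cycle_root !big_cons !big_nil !exprD !exprM; ring.
have := @prim_root_sum_expr_perm_eq _ _ _ P N p_pr prim_w erefl sum_PN.
move=> /(perm_map (fun n => n%:R : 'F_p)).
rewrite -!map_comp !(eq_map (Fp_nat_mod p_pr)) /= !natrD !natrM.
have Fp_neq (m n : nat) : (m < p)%N -> (n < p)%N -> m != n -> (m%:R : 'F_p) != n%:R.
  by move=> m_lt n_lt; rewrite Fp_nat_eq // !modn_small.
have ind_neq (m n : 'I_p) : m != n -> (ind m)%:R != (ind n)%:R :> 'F_p.
  by move=> mn; rewrite Fp_neq ?cycle_index_lt // (inj_eq (cycle_index_inj orbit_full)).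
have p_gt0 := prime_gt0 p_pr.
case/cross_sums_perm_eq; rewrite ?ind_neq //.
- by apply: (Fp_neq 2 0) => //; apply: leq_trans p_ge5.
- by apply: (Fp_neq s 0); rewrite // -lt0n.
- by apply: (Fp_neq t 0); rewrite // -lt0n.
- by move/eqP; rewrite Fp_nat_eq // !modn_small // => /eqP; left.
move/eqP; rewrite -natrD -[0]/(0%:R) Fp_nat_eq // mod0n => /eqP st_mod.
right; have := divn_eq (s + t) p; rewrite st_mod addn0.
by case: ((s + t) %/ p)%N => [|[|q]]; rewrite ?mulSn; lia.
Qed.

Lemma double_transposition_dft_zero_pair (x y : R[i]) : (x != 0) || (y != 0) ->
  exists2 s0, (s0 < p)%N & forall s, (0 < s < p)%N ->
    x * (e i ^+ s - e j ^+ s) + y * (e k ^+ s - e l ^+ s) = 0 ->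
    s = s0 \/ (s + s0 = p)%N.
Proof.
move=> xy; pose D s := x * (e i ^+ s - e j ^+ s) + y * (e k ^+ s - e l ^+ s).
have [s0 /andP[s0_gt0 /eqP Ds0] | no_zero] := pickP (fun s : 'I_p => (0 < s)%N && (D s == 0)).
  exists (val s0) => [|s s_range Ds]; first exact: ltn_ord.
  by apply: (double_transposition_dft_zeros xy s_range _ Ds Ds0); rewrite s0_gt0 ltn_ord.
exists 0%N => [|s /andP[s_gt0 s_lt] Ds]; first exact: prime_gt0.
by have := no_zero (Ordinal s_lt); rewrite /= s_gt0 /D Ds eqxx.
Qed.

End DoubleTranspositionZeros.

Theorem lemma4p6 (R : realType) (p : nat) (hp : prime p) (hp5 : (5 <= p)%N)
  (v : 'rV[R]_p) (hv : injective (fun m : 'I_p => v 0 m))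
  (a : 'rV[R]_p) (ha : a != 0)
  (i j k l : 'I_p) (hij : i != j) (hik : i != k) (hil : i != l)
  (hjk : j != k) (hjl : j != l) (hkl : k != l)
  (pi : 'S_p) (hpi : is_pcycle pi)
  (G : {group 'S_p}) (hpiG : pi \in G)
  (hdim : (3 < \dim (<<orbit_seq G v>>)%VS)%N)
  (hH1 : forall g, g \in G -> in_hyperplane a (pact g v))
  (hH2 : forall g, g \in G ->
           in_hyperplane a (pact (tperm i j * tperm k l)%g (pact g v))) :
  a 0 i = a 0 j /\ a 0 k = a 0 l.
Proof.
have [/andP[/eqP/subr0_eq -> /eqP/subr0_eq ->] // | ab_neq0] :=
  boolP ((a 0 i - a 0 j == 0) && (a 0 k - a 0 l == 0)).
case: hpi => x0 orbit_full; have [w prim_w] := closed_prim_root_exists R[i] hp.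
pose d m := a 0 m - a 0 ((tperm i j * tperm k l)%g m).
have d_orbit g : g \in G -> \sum_m d m * pact g v 0 m = 0.
  move=> g_in; move: (hH1 g g_in) (hH2 g g_in); rewrite /in_hyperplane => H1.
  rewrite sum_mul_pact => H2.
  by under eq_bigr do rewrite mulrBl; rewrite sumrB H1 H2 subrr.
have ab_neq0C : (((a 0 i - a 0 j)%:C)%C != 0) || (((a 0 k - a 0 l)%:C)%C != 0).
  by rewrite !fmorph_eq0 -negb_and.
have [s0 s0_lt d_zeros] := double_transposition_dft_zero_pair hp hp5 orbit_full prim_w
  hij hik hil hjl hkl ab_neq0C.
suff : (\dim <<orbit_seq G v>> <= 3)%N by rewrite leqNgt hdim.
apply: (dim_span_orbit_le3 (prime_gt0 hp) orbit_full prim_w hpiG d_orbit s0_lt) => s s_range.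
by rewrite dft_double_transposition //; apply: d_zeros.
Qed.
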